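(* Let $\lambda\in\mathbb R$ and write $u=x^2+x^4$. A smooth covector field $A$ on $\mathbb R^4$ satisfies $L_\xi A=0$ for $\xi\in\{e_{12}-e_{14}+\lambda e_2,\,e_1,\,e_3,\,e_2-e_4\}$ if and only if: (i) when $\lambda\neq0$, there are real constants $C_1,\dots,C_4$ with $$A_1=\frac{C_2}{\lambda}u+C_3,\quad A_2=\frac{C_2}{2\lambda^2}u^2+\frac{C_3}{\lambda}u+C_4,\quad A_3=C_1,\quad A_4=A_2+C_2;$$ (ii) when $\lambda=0$, $A_1=0$, $A_2=A_4=\Phi(u)$, $A_3=\Psi(u)$ for some smooth functions $\Phi,\Psi$ of one variable.
   Context: Work in $\mathbb R^4$ with Galilean (Cartesian) coordinates $x^1,x^2,x^3,x^4$ of Minkowski space (metric $\mathrm{diag}(-1,-1,-1,1)$). A potential on an open set $U\subseteq\mathbb R^4$ is a smooth covector field $A=A_i\,dx^i$; its components $A_i$ are always those with respect to the coordinates $x^i$, even when written as functions of other variables. For a vector field $\xi=\xi^k\partial_k$ the Lie derivative is $(L_\xi A)_i=\xi^k\partial_kA_i+A_k\partial_i\xi^k$. The vector fields used are, by components $(\xi^1,\xi^2,\xi^3,\xi^4)$: $e_1=(1,0,0,0)$, $e_2=(0,1,0,0)$, $e_3=(0,0,1,0)$, $e_4=(0,0,0,1)$, $e_{12}=(-x^2,x^1,0,0)$, $e_{13}=(x^3,0,-x^1,0)$, $e_{23}=(0,-x^3,x^2,0)$, $e_{14}=(x^4,0,0,x^1)$, $e_{24}=(0,x^4,0,x^2)$,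 $e_{34}=(0,0,x^4,x^3)$. A potential admits a family of vector fields if $L_\xi A=0$ for each $\xi$ in it (equivalently for every element of their linear span). ''Functions'' are smooth real functions; $\mathrm{ch}=\cosh$, $\mathrm{sh}=\sinh$. *)

From Stdlib Require Import Reals.
From Coquelicot Require Import Coquelicot.
Open Scope R_scope.

Inductive idx : Type := I1 | I2 | I3 | I4.

Definition idx_eqb (i j : idx) : bool :=
  match i, j with
  | I1, I1 | I2, I2 | I3, I3 | I4, I4 => true
  | _, _ => false
  end.

Definition pt := idx -> R.

Definition mkpt (a b c d : R) : pt :=
  fun i => match i with I1 => a | I2 => b | I3 => c | I4 => d end.

Definition upd (x : pt) (k : idx) (t : R) : pt :=
  fun j => if idx_eqb j k then t else x j.

Definition partial (k : idx) (f : pt -> R) (x : pt) : R :=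
  Derive (fun t => f (upd x k t)) (x k).

Definition has_partial (k : idx) (f : pt -> R) : Prop :=
  forall x : pt, ex_derive (fun t => f (upd x k t)) (x k).

Definition cont4 (f : pt -> R) : Prop :=
  forall (x : pt) (eps : R), 0 < eps -> exists delta : R, 0 < delta /\
    forall y : pt, (forall j, Rabs (y j - x j) < delta) -> Rabs (f y - f x) < eps.

Fixpoint Ck (k : nat) (f : pt -> R) : Prop :=
  match k with
  | O => cont4 f
  | S k' => cont4 f /\ (forall i, has_partial i f) /\ (forall i, Ck k' (partial i f))
  end.

Definition smooth4 (f : pt -> R) : Prop := forall k, Ck k f.

Definition smooth1 (f : R -> R) : Prop := forall (n : nat) (t : R), ex_derive_n f n t.

(* Covector fields A = A_i dx^i and vector fields xi = xi^k d_k, by components. *)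
Definition covector := idx -> pt -> R.
Definition vfield := idx -> pt -> R.

Definition sum4 (F : idx -> R) : R := F I1 + F I2 + F I3 + F I4.

Definition Lie (xi : vfield) (A : covector) (i : idx) (x : pt) : R :=
  sum4 (fun k => xi k x * partial k (A i) x + A k x * partial i (xi k) x).

Definition admits (A : covector) (xi : vfield) : Prop :=
  forall i x, Lie xi A i x = 0.

Definition vf (f1 f2 f3 f4 : pt -> R) : vfield :=
  fun k => match k with I1 => f1 | I2 => f2 | I3 => f3 | I4 => f4 end.

Definition e1 : vfield := vf (fun _ => 1) (fun _ => 0) (fun _ => 0) (fun _ => 0).
Definition e2 : vfield := vf (fun _ => 0) (fun _ => 1) (fun _ => 0) (fun _ => 0).
Definition e3 : vfield := vf (fun _ => 0) (fun _ => 0) (fun _ => 1) (fun _ => 0).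
Definition e4 : vfield := vf (fun _ => 0) (fun _ => 0) (fun _ => 0) (fun _ => 1).
Definition e12 : vfield := vf (fun x => - x I2) (fun x => x I1) (fun _ => 0) (fun _ => 0).
Definition e14 : vfield := vf (fun x => x I4) (fun _ => 0) (fun _ => 0) (fun x => x I1).

Definition vadd (a b : vfield) : vfield := fun k x => a k x + b k x.
Definition vscale (c : R) (a : vfield) : vfield := fun k x => c * a k x.
Definition vsub (a b : vfield) : vfield := fun k x => a k x - b k x.

Definition u_of (x : pt) : R := x I2 + x I4.

From Stdlib Require Import Reals Lra FunctionalExtensionality.
From Coquelicot Require Import Coquelicot.
Open Scope R_scope.

(* The fields e1, e3 and e2 - e4 have constant components, so their Lie derivatives are
   d_1 A_i, d_3 A_i and d_2 A_i - d_4 A_i.  Their vanishing makes every A_i a function g_i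
   of u = x^2 + x^4; for the last direction this uses the continuity of the partials,
   which gives a chain rule along the lines x^2 + x^4 = const.  For such A the x^1-terms
   of the Lie derivative along e12 - e14 + lam e2 cancel, leaving the linear system
   lam g_1' = g_4 - g_2, lam g_2' = lam g_4' = g_1, lam g_3' = 0 in u.  For lam <> 0 it
   integrates to the stated polynomials; for lam = 0 it says g_1 = 0 and g_2 = g_4. *)

Lemma const_of_is_derive_0 (g : R -> R) :
  (forall t, is_derive g t 0) -> forall a b, g a = g b.
Proof.
  intros Hg a b.
  destruct (MVT_gen g a b (fun _ => 0)) as [c [_ Hc]]; [intros; apply Hg | | lra].
  intros t _; apply continuity_pt_filterlim, (ex_derive_continuous g).
  exists 0; apply Hg.
Qed.

Lemma eq_of_same_derive (f g dg : R -> R) :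
  (forall t, is_derive f t (dg t)) -> (forall t, is_derive g t (dg t)) ->
  forall t, f t = g t + (f 0 - g 0).
Proof.
  intros Hf Hg t.
  enough (E : f t - g t = f 0 - g 0) by lra.
  apply (const_of_is_derive_0 (fun s => f s - g s)); intro s.
  replace 0 with (dg s - dg s) by ring.
  exact (is_derive_minus f g s _ _ (Hf s) (Hg s)).
Qed.

Lemma differentiable_pt_lim_of_partials (F P1 : R -> R -> R) (x y l2 : R) :
  (forall u v, is_derive (fun z => F z v) u (P1 u v)) ->
  is_derive (F x) y l2 ->
  continuity_2d_pt P1 x y ->
  differentiable_pt_lim F x y (P1 x y) l2.
Proof.
  intros HP1 HP2 Hc eps.
  set (e := pos_div_2 eps).
  destruct (Hc e) as [d1 Hd1].
  destruct (proj1 (is_derive_Reals _ _ _) HP2 e (cond_pos e)) as [d2 Hd2].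
  exists (mkposreal _ (Rmin_pos _ _ (cond_pos d1) (cond_pos d2))); simpl.
  intros u v Hu Hv.
  assert (Hu1 := Rlt_le_trans _ _ _ Hu (Rmin_l d1 d2)).
  assert (Hv1 := Rlt_le_trans _ _ _ Hv (Rmin_l d1 d2)).
  assert (Hv2 := Rlt_le_trans _ _ _ Hv (Rmin_r d1 d2)).
  assert (Err2 : Rabs (F x v - F x y - l2 * (v - y)) <= e * Rabs (v - y)).
  { destruct (Req_dec v y) as [-> | Hvy].
    - replace (F x y - F x y - l2 * (y - y)) with 0 by ring.
      rewrite Rabs_R0; apply Rmult_le_pos; [apply Rlt_le, cond_pos | apply Rabs_pos].
    - specialize (Hd2 (v - y) ltac:(lra) Hv2).
      replace (y + (v - y)) with v in Hd2 by ring.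
      replace (F x v - F x y - l2 * (v - y))
        with (((F x v - F x y) / (v - y) - l2) * (v - y)) by (field; lra).
      rewrite Rabs_mult; apply Rmult_le_compat_r; [apply Rabs_pos | lra]. }
  assert (Err1 : Rabs (F u v - F x v - P1 x y * (u - x)) <= e * Rabs (u - x)).
  { destruct (MVT_cor4 (fun z => F z v) (fun z => P1 z v) x (Rabs (u - x))
      (fun c _ => HP1 c v) u (Rle_refl _)) as [c [Hmvt Hcx]].
    replace (F u v - F x v - P1 x y * (u - x))
      with ((P1 c v - P1 x y) * (u - x)) by (simpl in Hmvt; lra).
    rewrite Rabs_mult; apply Rmult_le_compat_r; [apply Rabs_pos |].
    apply Rlt_le, Hd1; lra. }
  replace (F u v - F x y - (P1 x y * (u - x) + l2 * (v - y)))
    with ((F u v - F x v - P1 x y * (u - x)) + (F x v - F x y - l2 * (v - y)))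
    by ring.
  eapply Rle_trans; [apply Rabs_triang |].
  assert (Mu := Rmax_l (Rabs (u - x)) (Rabs (v - y))).
  assert (Mv := Rmax_r (Rabs (u - x)) (Rabs (v - y))).
  assert (He : 0 < e) by apply cond_pos.
  replace (pos eps) with (e + e) by (simpl; lra).
  nra.
Qed.

Lemma const_along_antidiagonal (F P1 P2 : R -> R -> R) :
  (forall u v, is_derive (fun z => F z v) u (P1 u v)) ->
  (forall u v, is_derive (F u) v (P2 u v)) ->
  (forall u v, continuity_2d_pt P1 u v) ->
  (forall u v, P1 u v = P2 u v) ->
  forall p q, F p q = F (p + q) 0.
Proof.
  intros H1 H2 Hc Heq p q.
  assert (D : forall s, is_derive (fun s => F (p + s) (q - s)) s 0).
  { intro s; apply is_derive_Reals.
    replace 0 with (P1 (p + s) (q - s) * 1 + P2 (p + s) (q - s) * -1)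
      by (rewrite Heq; ring).
    apply derivable_pt_lim_comp_2d.
    - apply differentiable_pt_lim_of_partials; auto.
    - apply is_derive_Reals; auto_derive; auto; ring.
    - apply is_derive_Reals; auto_derive; auto; ring. }
  assert (E := const_of_is_derive_0 _ D 0 q); simpl in E.
  now rewrite Rplus_0_r, Rminus_0_r, Rminus_diag in E.
Qed.

Lemma smooth4_cont f : smooth4 f -> cont4 f.
Proof. intros H; exact (H 0%nat). Qed.

Lemma smooth4_has_partial f k : smooth4 f -> has_partial k f.
Proof. intros H; apply (H 1%nat). Qed.

Lemma smooth4_partial f k : smooth4 f -> smooth4 (partial k f).
Proof. intros H n; apply (H (S n)). Qed.

Lemma upd_upd x k s t : upd (upd x k s) k t = upd x k t.
Proof. apply functional_extensionality; intro j; unfold upd; now destruct idx_eqb. Qed.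

Lemma upd_same x k t : upd x k t k = t.
Proof. now destruct k. Qed.

Lemma mkpt_eta (x : pt) : x = mkpt (x I1) (x I2) (x I3) (x I4).
Proof. apply functional_extensionality; now intros []. Qed.

Lemma upd_mkpt_I1 a b c d s : upd (mkpt a b c d) I1 s = mkpt s b c d.
Proof. apply functional_extensionality; now intros []. Qed.

Lemma upd_mkpt_I2 a b c d s : upd (mkpt a b c d) I2 s = mkpt a s c d.
Proof. apply functional_extensionality; now intros []. Qed.

Lemma upd_mkpt_I3 a b c d s : upd (mkpt a b c d) I3 s = mkpt a b s d.
Proof. apply functional_extensionality; now intros []. Qed.

Lemma upd_mkpt_I4 a b c d s : upd (mkpt a b c d) I4 s = mkpt a b c s.
Proof. apply functional_extensionality; now intros []. Qed.

Lemma is_derive_upd f k x t : has_partial k f ->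
  is_derive (fun s => f (upd x k s)) t (partial k f (upd x k t)).
Proof.
  intros H; specialize (H (upd x k t)).
  unfold partial in *; rewrite upd_same in *.
  assert (E : (fun s => f (upd (upd x k t) k s)) = (fun s => f (upd x k s)))
    by (apply functional_extensionality; intro; now rewrite upd_upd).
  rewrite E; apply Derive_correct.
  eapply ex_derive_ext; [| exact H]; intro; simpl; now rewrite upd_upd.
Qed.

Lemma const_along_upd f k : has_partial k f -> (forall x, partial k f x = 0) ->
  forall x s t, f (upd x k s) = f (upd x k t).
Proof.
  intros Hk H0 x s t; apply (const_of_is_derive_0 (fun s => f (upd x k s))); intro r.
  rewrite <- (H0 (upd x k r)); now apply is_derive_upd.
Qed.

Lemma is_derive_mkpt_I2 f a c d t : has_partial I2 f ->
  is_derive (fun s => f (mkpt a s c d)) t (partial I2 f (mkpt a t c d)).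
Proof.
  intros H; assert (L := is_derive_upd f I2 (mkpt a 0 c d) t H).
  rewrite upd_mkpt_I2 in L.
  eapply is_derive_ext; [| exact L]; intro s; simpl; now rewrite upd_mkpt_I2.
Qed.

Lemma is_derive_mkpt_I4 f a b c t : has_partial I4 f ->
  is_derive (fun s => f (mkpt a b c s)) t (partial I4 f (mkpt a b c t)).
Proof.
  intros H; assert (L := is_derive_upd f I4 (mkpt a b c 0) t H).
  rewrite upd_mkpt_I4 in L.
  eapply is_derive_ext; [| exact L]; intro s; simpl; now rewrite upd_mkpt_I4.
Qed.

Lemma continuity_2d_pt_mkpt g : cont4 g ->
  forall u v, continuity_2d_pt (fun p q => g (mkpt 0 p 0 q)) u v.
Proof.
  intros Hg u v eps.
  destruct (Hg (mkpt 0 u 0 v) eps (cond_pos eps)) as [d [Hd H]].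
  exists (mkposreal d Hd); intros p q Hp Hq; apply H.
  intros []; simpl; auto; rewrite Rminus_diag, Rabs_R0; exact Hd.
Qed.

Lemma factors_through_u f : smooth4 f ->
  (forall x, partial I1 f x = 0) -> (forall x, partial I3 f x = 0) ->
  (forall x, partial I2 f x = partial I4 f x) ->
  forall x, f x = f (mkpt 0 (u_of x) 0 0).
Proof.
  intros Hs H1 H3 H24 x.
  rewrite (mkpt_eta x) at 1; unfold u_of.
  rewrite <- (upd_mkpt_I1 0), (const_along_upd f I1 (smooth4_has_partial f I1 Hs) H1 _ _ 0).
  rewrite upd_mkpt_I1, <- (upd_mkpt_I3 _ _ 0).
  rewrite (const_along_upd f I3 (smooth4_has_partial f I3 Hs) H3 _ _ 0), upd_mkpt_I3.
  apply (const_along_antidiagonal (fun p q => f (mkpt 0 p 0 q))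
    (fun p q => partial I2 f (mkpt 0 p 0 q)) (fun p q => partial I4 f (mkpt 0 p 0 q))).
  - intros; apply is_derive_mkpt_I2, smooth4_has_partial, Hs.
  - intros; apply is_derive_mkpt_I4, smooth4_has_partial, Hs.
  - apply continuity_2d_pt_mkpt, smooth4_cont, smooth4_partial, Hs.
  - intros; apply H24.
Qed.

Lemma partial_comp_u f (G G' : R -> R) :
  (forall x, f x = G (u_of x)) -> (forall t, is_derive G t (G' t)) ->
  forall x, partial I1 f x = 0 /\ partial I2 f x = G' (u_of x) /\
            partial I3 f x = 0 /\ partial I4 f x = G' (u_of x).
Proof.
  intros Hf HG x; unfold partial.
  assert (Along : forall k, Derive (fun t => f (upd x k t)) (x k)
                          = Derive (fun t => G (u_of (upd x k t))) (x k))
    by (intro; apply Derive_ext; intro; apply Hf).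
  rewrite !Along; unfold u_of, upd; cbn [idx_eqb]; repeat split.
  - apply Derive_const.
  - apply is_derive_unique; rewrite <- (scal_one (G' _)).
    apply (is_derive_comp G (fun s => s + x I4)); [apply HG | auto_derive; auto].
  - apply Derive_const.
  - apply is_derive_unique; rewrite <- (scal_one (G' _)).
    apply (is_derive_comp G (fun s => x I2 + s)); [apply HG | auto_derive; auto; ring].
Qed.

Lemma smooth1_restrict_I2 f : smooth4 f -> smooth1 (fun t => f (mkpt 0 t 0 0)).
Proof.
  intros Hs.
  assert (Dn : forall n, smooth4 (Nat.iter n (partial I2) f) /\
      Derive_n (fun t => f (mkpt 0 t 0 0)) n = fun t => Nat.iter n (partial I2) f (mkpt 0 t 0 0)).
  { induction n as [| n [IHs IHd]]; [now split |]; simpl; split.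
    - now apply smooth4_partial.
    - rewrite IHd; apply functional_extensionality; intro t.
      apply is_derive_unique, is_derive_mkpt_I2, smooth4_has_partial, IHs. }
  intros [| n] t; [exact I |]; simpl.
  destruct (Dn n) as [Hn ->].
  eexists; apply is_derive_mkpt_I2, smooth4_has_partial, Hn.
Qed.

Definition xi (lam : R) : vfield := vadd (vsub e12 e14) (vscale lam e2).

Definition admits_family (lam : R) (A : covector) : Prop :=
  admits A (xi lam) /\ admits A e1 /\ admits A e3 /\ admits A (vsub e2 e4).

Ltac simpl_Derive :=
  match goal with |- context [Derive ?f ?y] =>
    let H := fresh in
    assert (H : is_derive f y _) by (auto_derive; [auto | reflexivity]);
    rewrite (is_derive_unique f y _ H); clear H
  end.

(* Occurrences 2, 4, 6, 8 of [partial] are the derivatives of the (affine) components of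
   the vector field; only these are computed. *)
Ltac expand_Lie :=
  unfold Lie, sum4, xi, vadd, vsub, vscale, e1, e2, e3, e4, e12, e14, vf;
  unfold partial at 2 4 6 8; cbn [upd idx_eqb];
  repeat simpl_Derive; ring.

Lemma Lie_xi lam A i x :
  Lie (xi lam) A i x =
  - (x I2 + x I4) * partial I1 (A i) x + (x I1 + lam) * partial I2 (A i) x
  - x I1 * partial I4 (A i) x +
  match i with I1 => A I2 x - A I4 x | I2 | I4 => - A I1 x | I3 => 0 end.
Proof. destruct i; expand_Lie. Qed.

Lemma Lie_e1 A i x : Lie e1 A i x = partial I1 (A i) x.
Proof. destruct i; expand_Lie. Qed.

Lemma Lie_e3 A i x : Lie e3 A i x = partial I3 (A i) x.
Proof. destruct i; expand_Lie. Qed.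

Lemma Lie_e2_sub_e4 A i x : Lie (vsub e2 e4) A i x = partial I2 (A i) x - partial I4 (A i) x.
Proof. destruct i; expand_Lie. Qed.

Definition reduced_system (lam : R) (g g' : idx -> R -> R) : Prop :=
  forall t, lam * g' I1 t = g I4 t - g I2 t /\ lam * g' I2 t = g I1 t /\
            lam * g' I3 t = 0 /\ lam * g' I4 t = g I1 t.

Lemma reduced_system_of_admits lam A : (forall i, smooth4 (A i)) -> admits_family lam A ->
  exists g g' : idx -> R -> R, (forall i x, A i x = g i (u_of x)) /\
    (forall i, smooth1 (g i)) /\ (forall i t, is_derive (g i) t (g' i t)) /\
    reduced_system lam g g'.
Proof.
  intros Hs (Hxi & H1 & H3 & H24).
  assert (P1 : forall i x, partial I1 (A i) x = 0)
    by (intros; rewrite <- Lie_e1; apply H1).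
  assert (P3 : forall i x, partial I3 (A i) x = 0)
    by (intros; rewrite <- Lie_e3; apply H3).
  assert (P24 : forall i x, partial I2 (A i) x = partial I4 (A i) x)
    by (intros i x; assert (E := H24 i x); rewrite Lie_e2_sub_e4 in E; lra).
  exists (fun i t => A i (mkpt 0 t 0 0)), (fun i t => partial I2 (A i) (mkpt 0 t 0 0)).
  split; [| split; [| split]].
  - intros; now apply factors_through_u.
  - intro; now apply smooth1_restrict_I2.
  - intros; now apply is_derive_mkpt_I2, smooth4_has_partial.
  - intro t.
    assert (E : forall i, Lie (xi lam) A i (mkpt 0 t 0 0) = 0) by (intro; apply Hxi).
    assert (E1 := E I1); assert (E2 := E I2); assert (E3 := E I3); assert (E4 := E I4).
    rewrite Lie_xi, P1, <- P24 in E1, E2, E3, E4; simpl in *.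
    repeat split; lra.
Qed.

Lemma admits_of_reduced_system lam A (g g' : idx -> R -> R) :
  (forall i x, A i x = g i (u_of x)) -> (forall i t, is_derive (g i) t (g' i t)) ->
  reduced_system lam g g' -> admits_family lam A.
Proof.
  intros HA Hg Hsys.
  assert (P : forall i x, partial I1 (A i) x = 0 /\ partial I2 (A i) x = g' i (u_of x) /\
                          partial I3 (A i) x = 0 /\ partial I4 (A i) x = g' i (u_of x))
    by (intros i; apply (partial_comp_u (A i) (g i)); auto).
  repeat split; intros i x; destruct (P i x) as (Q1 & Q2 & Q3 & Q4).
  - destruct (Hsys (u_of x)) as (S1 & S2 & S3 & S4).
    rewrite Lie_xi, Q1, Q2, Q4.
    destruct i; rewrite ?HA; lra.
  - now rewrite Lie_e1.
  - now rewrite Lie_e3.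
  - rewrite Lie_e2_sub_e4, Q2, Q4; ring.
Qed.

Lemma reduced_system_solution lam (g g' : idx -> R -> R) : lam <> 0 ->
  (forall i t, is_derive (g i) t (g' i t)) -> reduced_system lam g g' ->
  exists C1 C2 C3 C4, forall t,
    g I1 t = C2 / lam * t + C3 /\
    g I2 t = C2 / (2 * lam ^ 2) * t ^ 2 + C3 / lam * t + C4 /\
    g I3 t = C1 /\ g I4 t = g I2 t + C2.
Proof.
  intros Hlam Hg Hsys.
  assert (D : forall t, g' I1 t = (g I4 t - g I2 t) / lam /\ g' I2 t = g I1 t / lam /\
                        g' I3 t = 0 /\ g' I4 t = g I1 t / lam)
    by (intro t; destruct (Hsys t) as (S1 & S2 & S3 & S4);
        repeat split; apply (Rmult_eq_reg_l lam); auto;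
        [rewrite S1 | rewrite S2 | rewrite S3 | rewrite S4]; field; auto).
  set (C2 := g I4 0 - g I2 0); set (C3 := g I1 0).
  assert (G3 : forall t, g I3 t = g I3 0).
  { intro; apply const_of_is_derive_0; intro s.
    rewrite <- (proj1 (proj2 (proj2 (D s)))); apply Hg. }
  assert (G42 : forall t, g I4 t = g I2 t + C2).
  { apply (eq_of_same_derive _ _ (g' I2)); intro s; [| apply Hg].
    replace (g' I2 s) with (g' I4 s) by (destruct (D s) as (_ & -> & _ & ->); auto).
    apply Hg. }
  assert (G1 : forall t, g I1 t = C2 / lam * t + C3).
  { intro t.
    rewrite (eq_of_same_derive (g I1) (fun s => C2 / lam * s) (fun _ => C2 / lam)).
    - unfold C3; ring.
    - intro s; replace (C2 / lam) with (g' I1 s)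
        by (rewrite (proj1 (D s)), G42; field; auto).
      apply Hg.
    - intro s; auto_derive; auto; ring. }
  assert (G2 : forall t, g I2 t = C2 / (2 * lam ^ 2) * t ^ 2 + C3 / lam * t + g I2 0).
  { intro t.
    rewrite (eq_of_same_derive (g I2) (fun s => C2 / (2 * lam ^ 2) * s ^ 2 + C3 / lam * s)
      (fun s => (C2 / lam * s + C3) / lam)).
    - ring.
    - intro s; rewrite <- G1, <- (proj1 (proj2 (D s))); apply Hg.
    - intro s; auto_derive; auto; field; auto. }
  exists (g I3 0), C2, C3, (g I2 0); intro t.
  rewrite G42, G1, G2, G3; repeat split; ring.
Qed.

Lemma admits_family_iff_neq0 lam A : (forall i, smooth4 (A i)) -> lam <> 0 ->
  admits_family lam A <->
  exists C1 C2 C3 C4 : R, forall x : pt,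
    A I1 x = C2 / lam * u_of x + C3 /\
    A I2 x = C2 / (2 * lam ^ 2) * (u_of x) ^ 2 + C3 / lam * u_of x + C4 /\
    A I3 x = C1 /\ A I4 x = A I2 x + C2.
Proof.
  intros Hs Hlam; split.
  - intros Hadm.
    destruct (reduced_system_of_admits lam A Hs Hadm) as (g & g' & HA & _ & Hg & Hsys).
    destruct (reduced_system_solution lam g g' Hlam Hg Hsys) as (C1 & C2 & C3 & C4 & Hsol).
    exists C1, C2, C3, C4; intro x; rewrite !HA; apply Hsol.
  - intros (C1 & C2 & C3 & C4 & HC).
    pose (q t := C2 / (2 * lam ^ 2) * t ^ 2 + C3 / lam * t + C4).
    apply (admits_of_reduced_system lam A
      (fun i => match i with
         | I1 => fun t => C2 / lam * t + C3 | I2 => q | I3 => fun _ => C1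
         | I4 => fun t => q t + C2 end)
      (fun i => match i with
         | I1 => fun _ => C2 / lam | I2 | I4 => fun t => (C2 / lam * t + C3) / lam
         | I3 => fun _ => 0 end)).
    + intros [] x; destruct (HC x) as (h1 & h2 & h3 & h4); auto.
      now rewrite h4, h2.
    + intros [] t; unfold q; auto_derive; auto; field; auto.
    + intro t; unfold q; repeat split; field; auto.
Qed.

Lemma admits_family_iff_eq0 A : (forall i, smooth4 (A i)) ->
  admits_family 0 A <->
  exists Phi Psi : R -> R, smooth1 Phi /\ smooth1 Psi /\ forall x : pt,
    A I1 x = 0 /\ A I2 x = Phi (u_of x) /\ A I4 x = Phi (u_of x) /\
    A I3 x = Psi (u_of x).
Proof.
  intros Hs; split.
  - intros Hadm.
    destruct (reduced_system_of_admits 0 A Hs Hadm) as (g & g' & HA & Hsm & _ & Hsys).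
    exists (g I2), (g I3); split; [| split]; auto.
    intro x; rewrite !HA; destruct (Hsys (u_of x)) as (S1 & S2 & _).
    repeat split; lra.
  - intros (Phi & Psi & HPhi & HPsi & HA).
    apply (admits_of_reduced_system 0 A
      (fun i => match i with I1 => fun _ => 0 | I2 | I4 => Phi | I3 => Psi end)
      (fun i => match i with I1 => fun _ => 0 | I2 | I4 => Derive Phi | I3 => Derive Psi end)).
    + intros [] x; now destruct (HA x) as (h1 & h2 & h4 & h3).
    + intros [] t; [auto_derive; auto | ..]; apply Derive_correct;
        [apply (HPhi 1%nat) | apply (HPsi 1%nat) | apply (HPhi 1%nat)].
    + intro t; repeat split; ring.
Qed.

Theorem mainTheorem14 (lam : R) (A : covector) :
  (forall i, smooth4 (A i)) ->
  (lam <> 0 ->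
     (admits A (vadd (vsub e12 e14) (vscale lam e2)) /\ admits A e1 /\
      admits A e3 /\ admits A (vsub e2 e4))
     <->
     exists C1 C2 C3 C4 : R, forall x : pt,
       A I1 x = C2 / lam * u_of x + C3 /\
       A I2 x = C2 / (2 * lam ^ 2) * (u_of x) ^ 2 + C3 / lam * u_of x + C4 /\
       A I3 x = C1 /\
       A I4 x = A I2 x + C2) /\
  (lam = 0 ->
     (admits A (vadd (vsub e12 e14) (vscale lam e2)) /\ admits A e1 /\
      admits A e3 /\ admits A (vsub e2 e4))
     <->
     exists Phi Psi : R -> R, smooth1 Phi /\ smooth1 Psi /\ forall x : pt,
       A I1 x = 0 /\ A I2 x = Phi (u_of x) /\ A I4 x = Phi (u_of x) /\
       A I3 x = Psi (u_of x)).
Proof.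
  intros Hs; split; intros Hlam.
  - exact (admits_family_iff_neq0 lam A Hs Hlam).
  - subst lam; exact (admits_family_iff_eq0 A Hs).
Qed.
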